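(* Let $T$ be a finite tree, and let $\Delta$ and $\Sigma$ be orbits of the action of $\mathrm{Aut}(T)$ on the vertex set of $T$. For an orbit $\Theta$, let $T_\Theta$ be the subgraph of $T$ consisting of all vertices and edges of $T$ that lie on the path from $\alpha$ to $\beta$ for some $\alpha,\beta\in\Theta$. If some vertex $\gamma\in\Sigma$ is a vertex of $T_\Delta$, then $T_\Sigma$ is a subtree of $T_\Delta$.
   Context: $\mathrm{Aut}(T)$ is the automorphism group of $T$. *)

From mathcomp Require Import all_boot all_fingroup.
Set Implicit Arguments. Unset Strict Implicit. Unset Printing Implicit Defensive.

Definition simple_graph (V : finType) (e : rel V) : Prop :=
  symmetric e /\ irreflexive e.

Definition spath (V : finType) (e : rel V) (a b : V) (p : seq V) : Prop :=
  [/\ path e a p, last a p = b & uniq (a :: p)].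

Definition has_cycle (V : finType) (e : rel V) : Prop :=
  exists (a : V) (p : seq V),
    [/\ path e a p, uniq (a :: p), 2 <= size p & e (last a p) a].

Definition is_tree (V : finType) (e : rel V) : Prop :=
  [/\ simple_graph e, (forall x y : V, connect e x y) & ~ has_cycle e].

Definition is_aut (V : finType) (e : rel V) (f : {perm V}) : bool :=
  [forall x : V, forall y : V, e (f x) (f y) == e x y].

Definition aut_orbit (V : finType) (e : rel V) (x : V) : {set V} :=
  [set y | [exists f : {perm V}, is_aut e f && (f x == y)]].

Definition is_aut_orbit (V : finType) (e : rel V) (O : {set V}) : Prop :=
  exists x : V, O = aut_orbit e x.

Definition span_vertex (V : finType) (e : rel V) (Th : {set V}) (v : V) : Prop :=
  exists (a b : V) (p : seq V),
    [/\ a \in Th, b \in Th, spath e a b p & v \in a :: p].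

Definition span_edge (V : finType) (e : rel V) (Th : {set V}) (u w : V) : Prop :=
  exists (a b : V) (p : seq V),
    [/\ a \in Th, b \in Th, spath e a b p &
        infix [:: u; w] (a :: p) || infix [:: w; u] (a :: p)].

Definition span_subgraph (V : finType) (e : rel V) (S D : {set V}) : Prop :=
  (forall v, span_vertex e S v -> span_vertex e D v) /\
  (forall u w, span_edge e S u w -> span_edge e D u w).

From mathcomp Require Import all_boot all_fingroup.

Set Implicit Arguments. Unset Strict Implicit. Unset Printing Implicit Defensive.

(* Deleting an edge uw of a tree splits its vertices into two sides, and a
   simple path traverses uw iff its endpoints lie on different sides. If s1 and
   s2 lie on paths between vertices of D, then each side of an edge of the path
   from s1 to s2 contains an endpoint of the D-path through s1, resp. s2, so the
   path between these two endpoints traverses the edge: T_D is convex.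
   Automorphisms map T_Delta onto itself, so one vertex of Sigma in T_Delta puts
   the whole orbit Sigma in T_Delta, and convexity gives T_Sigma within T_Delta. *)

Lemma infix_pred (T : eqType) (x v : T) (p : seq T) :
  v \in p -> exists t, infix [:: t; v] (x :: p).
Proof.
elim: p x => [|y p IHp] x //; rewrite inE => /predU1P[->|/(IHp y)[t ht]].
  by exists x; rewrite infix_consl /= !eqxx prefix0s.
by exists t; rewrite infix_consl ht orbT.
Qed.

Section EdgeCut.
Variables (V : finType) (e : rel V).
Hypothesis e_sym : symmetric e.
Variables u w : V.

Definition cut_edge (x y : V) := ((x == u) && (y == w)) || ((x == w) && (y == u)).

Definition e_cut : rel V := fun x y => e x y && ~~ cut_edge x y.

Definition side (x : V) := connect e_cut x u.

Lemma e_cut_sym : symmetric e_cut.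
Proof.
move=> x y; rewrite /e_cut /cut_edge e_sym; congr (_ && ~~ _).
by case: (x == u) (y == w) (x == w) (y == u) => [] [] [] [].
Qed.

Lemma connect_side x y : connect e_cut x y -> side x = side y.
Proof.
move=> cxy; apply/idP/idP => [|/(connect_trans cxy)//].
by apply: connect_trans; rewrite (sym_connect_sym e_cut_sym).
Qed.

Lemma path_cut_connect x q : path e x q ->
  (u \notin x :: q) || (w \notin x :: q) -> connect e_cut x (last x q).
Proof.
elim: q x => [|y q IHq] x /=; first by rewrite connect0.
case/andP=> exy pq avoid; apply: connect_trans (connect1 _) (IHq y pq _).
  rewrite /e_cut /cut_edge exy /=.
  by apply/negP=> /orP[]/andP[/eqP ex /eqP ey]; move: avoid;
    rewrite -ex -ey !inE !eqxx ?orbT.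
by case/orP: avoid; rewrite !inE negb_or => /andP[_ ->]; rewrite ?orbT.
Qed.

Lemma side_neq_cut_edge x y : e x y -> side x != side y -> cut_edge x y.
Proof.
move=> exy; apply: contraR => not_uw.
by rewrite (@connect_side x y) // connect1 // /e_cut exy not_uw.
Qed.

Lemma path_crosses_cut x q : path e x q -> side x != side (last x q) ->
  infix [:: u; w] (x :: q) || infix [:: w; u] (x :: q).
Proof.
elim: q x => [|y q IHq] x /=; first by rewrite eqxx.
case/andP=> exy pq; have [-> /(IHq y pq)|sxy _] := eqVneq (side x) (side y).
  by rewrite !infix_consl => /orP[] ->; rewrite !orbT.
by case/orP: (side_neq_cut_edge exy sxy) => /andP[/eqP-> /eqP->];
  rewrite !eqxx prefix0s ?orbT.
Qed.

(* A simple path crosses the cut at most once: after traversing uw it cannot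
   revisit u or w. *)
Lemma uniq_path_side_last x q z : path e x q -> uniq (x :: q) ->
  z \in x :: q -> side x != side z -> side (last x q) = side z.
Proof.
elim: q x => [|y q IHq] x /=; first by rewrite inE => _ _ /eqP->; rewrite eqxx.
case/andP=> exy pq /andP[xNq uq]; rewrite inE => /predU1P[->|zq]; first by rewrite eqxx.
have [->|sxy] := eqVneq (side x) (side y); first exact: IHq.
have ycq : connect e_cut y (last y q).
  apply: path_cut_connect pq _.
  by case/orP: (side_neq_cut_edge exy sxy) => /andP[/eqP<- _]; rewrite xNq ?orbT.
rewrite -(connect_side ycq).
by move: sxy; case: (side x) (side y) (side z) => [] [] [].
Qed.

Lemma span_vertex_side (D : {set V}) s :
  span_vertex e D s -> exists2 x, x \in D & side x = side s.
Proof.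
case=> [a [b [p [aD bD [pp lp up] sp]]]].
have [|sas] := eqVneq (side a) (side s); first by exists a.
by exists b; rewrite // -lp; apply: uniq_path_side_last sas.
Qed.

Hypothesis acyclic : ~ has_cycle e.
Hypothesis u_neq_w : u != w.
Hypothesis e_uw : e u w.

(* A path from u to w avoiding the edge uw would close a cycle with it. *)
Lemma cut_disconnects : ~~ connect e_cut u w.
Proof.
apply/negP => /connectP[_ /shortenP[p pp up _] lp]; apply: acyclic.
exists u, p; split=> //; last by rewrite -lp e_sym.
  by apply: sub_path pp => ? ? /andP[].
move: pp lp; case: p {up} => [|a [|b q]] //= => [_ wu|ua wa].
  by move: u_neq_w; rewrite wu eqxx.
by move: ua; rewrite -wa /e_cut /cut_edge !eqxx andbF.
Qed.

Lemma side_u_neq_w : side u != side w.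
Proof. by rewrite /side connect0 (sym_connect_sym e_cut_sym) cut_disconnects. Qed.

Lemma uniq_path_side_neq x q : path e x q -> uniq (x :: q) ->
  u \in x :: q -> w \in x :: q -> side x != side (last x q).
Proof.
move=> pq uniq_q uq wq; have [sxu|sxu] := eqVneq (side x) (side u).
  by rewrite (uniq_path_side_last pq uniq_q wq) ?sxu side_u_neq_w.
by rewrite (uniq_path_side_last pq uniq_q uq sxu).
Qed.

Hypothesis connected : forall x y, connect e x y.

Lemma span_edge_between (D : {set V}) s1 s2 p :
  span_vertex e D s1 -> span_vertex e D s2 -> spath e s1 s2 p ->
  u \in s1 :: p -> w \in s1 :: p -> span_edge e D u w.
Proof.
move=> /span_vertex_side[x xD sx] /span_vertex_side[y yD sy] [pp lp up] us1 ws1.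
have /connectP[_ /shortenP[q pq uq _] lq] := connected x y.
exists x, y, q; split=> //; apply: path_crosses_cut pq _.
by rewrite -lq sx sy -lp uniq_path_side_neq.
Qed.

End EdgeCut.

Section Convexity.
Variables (V : finType) (e : rel V).

Lemma span_edgeC (D : {set V}) u w : span_edge e D u w -> span_edge e D w u.
Proof. by case=> [a [b [p [aD bD sp uw]]]]; exists a, b, p; rewrite orbC. Qed.

Lemma span_edge_vertex (D : {set V}) u w : span_edge e D u w -> span_vertex e D w.
Proof.
case=> [a [b [p [aD bD sp /orP uw]]]]; exists a, b, p; split=> //.
by case: uw => /mem_infix; apply; rewrite !inE eqxx ?orbT.
Qed.

Lemma path_infix_edge x q u w : path e x q -> infix [:: u; w] (x :: q) -> e u w.
Proof.
elim: q x => [|y q IHq] x; first by rewrite /= !andbF.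
rewrite infix_consl => /andP[exy pq] /orP[|/(IHq y pq)//].
by rewrite /= => /andP[/eqP-> /andP[/eqP-> _]].
Qed.

Hypothesis tree : is_tree e.

Lemma span_edge_convex (D : {set V}) s1 s2 p u w :
  span_vertex e D s1 -> span_vertex e D s2 -> spath e s1 s2 p ->
  infix [:: u; w] (s1 :: p) -> span_edge e D u w.
Proof.
case: tree => [[e_sym e_irr] connected acyclic] sD1 sD2 sp uwp.
have e_uw : e u w by case: sp => pp _ _; apply: path_infix_edge pp uwp.
have u_neq_w : u != w by apply: contraTneq e_uw => ->; rewrite e_irr.
apply: span_edge_between sD1 sD2 sp _ _ => //;
  by apply: (mem_infix uwp); rewrite !inE eqxx ?orbT.
Qed.

Lemma span_subgraph_of_vertices (S D : {set V}) :
  {in S, forall s, span_vertex e D s} -> span_subgraph e S D.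
Proof.
move=> SD; split=> [v|u w] [a [b [p [aS bS sp]]]].
  rewrite inE => /predU1P[->|/(infix_pred a)[t tv]]; first exact: SD.
  exact/span_edge_vertex/(span_edge_convex (SD a aS) (SD b bS) sp tv).
by case/orP=> [|/(span_edge_convex (SD a aS) (SD b bS) sp)/span_edgeC//];
  apply: span_edge_convex (SD a aS) (SD b bS) sp.
Qed.

End Convexity.

Section Automorphisms.
Variables (V : finType) (e : rel V).

Lemma autE (f : {perm V}) x y : is_aut e f -> e (f x) (f y) = e x y.
Proof. by move=> /forallP/(_ x)/forallP/(_ y)/eqP. Qed.

Lemma is_autM (f g : {perm V}) : is_aut e f -> is_aut e g -> is_aut e (f * g).
Proof.
by move=> af ag; apply/forallP=> x; apply/forallP=> y; rewrite !permM !autE.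
Qed.

Lemma is_autV (f : {perm V}) : is_aut e f -> is_aut e f^-1.
Proof.
by move=> af; apply/forallP=> x; apply/forallP=> y; rewrite -(autE _ _ af) !permKV.
Qed.

Lemma aut_orbitP x y :
  reflect (exists2 f : {perm V}, is_aut e f & f x = y) (y \in aut_orbit e x).
Proof.
rewrite inE; apply: (iffP existsP) => [[f /andP[af /eqP fx]]|[f af fx]].
  by exists f.
by exists f; rewrite af fx eqxx.
Qed.

Lemma aut_orbit_aut (f : {perm V}) x z :
  is_aut e f -> z \in aut_orbit e x -> f z \in aut_orbit e x.
Proof.
by move=> af /aut_orbitP[g ag <-]; apply/aut_orbitP; exists (g * f)%g; rewrite ?is_autM ?permM.
Qed.

Lemma spath_aut (f : {perm V}) a b p :
  is_aut e f -> spath e a b p -> spath e (f a) (f b) (map f p).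
Proof.
move=> af [pp <- up]; split; last by rewrite -map_cons map_inj_uniq //; apply: perm_inj.
  by rewrite path_map (@eq_path _ _ e) // => x y /=; rewrite autE.
by rewrite last_map.
Qed.

Lemma span_vertex_aut (Th : {set V}) (f : {perm V}) v : is_aut e f ->
  {in Th, forall z, f z \in Th} -> span_vertex e Th v -> span_vertex e Th (f v).
Proof.
move=> af fTh [a [b [p [aTh bTh sp vp]]]].
exists (f a), (f b), (map f p); split; rewrite ?fTh //; first exact: spath_aut.
by rewrite -map_cons map_f.
Qed.

Lemma span_vertex_orbit x y g s :
  g \in aut_orbit e x -> s \in aut_orbit e x ->
  span_vertex e (aut_orbit e y) g -> span_vertex e (aut_orbit e y) s.
Proof.
move=> /aut_orbitP[f1 af1 <-] /aut_orbitP[f2 af2 <-].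
have af : is_aut e (f1^-1 * f2) by rewrite is_autM ?is_autV.
have -> : f2 x = (f1^-1 * f2)%g (f1 x) by rewrite permM permK.
by apply: span_vertex_aut => // z; apply: aut_orbit_aut.
Qed.

End Automorphisms.

Theorem mainTheorem10 (V : finType) (e : rel V) (Delta Sigma : {set V}) :
  is_tree e ->
  is_aut_orbit e Delta -> is_aut_orbit e Sigma ->
  (exists2 g : V, g \in Sigma & span_vertex e Delta g) ->
  span_subgraph e Sigma Delta.
Proof.
move=> tree [y ->] [x ->] [g gS gD].
apply: span_subgraph_of_vertices => // s sS.
exact: span_vertex_orbit gS sS gD.
Qed.
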